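(* $(\overline{\mathcal{D}},\overline{\delta},\overline{\varepsilon})$ is a comonad on $\mathsf{CLAC}$.
   Context: Composition in diagrammatic order. A Cartesian left additive category: category with finite products, hom-sets commutative monoids with $f(g+h)=fg+fh$, $f0=0$, projections additive. $\mathsf{CLAC}$: Cartesian left additive categories and functors preserving finite products strictly ($\mathsf{F}(A\times B)=\mathsf{F}A\times\mathsf{F}B$, terminal object, $\mathsf{F}(\pi_j)=\pi_j$) and $+$, $0$. Let $\mathsf{P}(A)=A\times A$, $\mathsf{P}(f)=f\times f$. A pre-$\mathsf{D}$-sequence $f_\bullet:A\to B$ is $(f_n)_{n\ge0}$ with $f_n:\mathsf{P}^n(A)\to B$. $\mathsf{T}(f_\bullet)_n=\langle\mathsf{P}^n(\pi_0)f_n,f_{n+1}\rangle$ (a sequence $\mathsf{P}(A)\to\mathsf{P}(B)$); $\mathsf{D}[f_\bullet]_n=f_{n+1}$. $\overline{\mathcal{D}}[\mathbb{X}]$: objects of $\mathbb{X}$, pre-$\mathsf{D}$-sequences, identity $i_0=1$, $i_n=\pi_1\cdots\pi_1$, composition $(f_\bullet\ast g_\bullet)_n=\mathsf{T}^n(f_\bullet)_0g_n$, finite products (projections $i_\bullet\cdot\pi_j$, $(i_\bullet\cdot\pi_j)_n=i_n\pi_j$; pairing $\langle f_n,g_n\rangle$; terminal object of $\mathbb{X}$), addition $0_n=0$, $(f_\bullet+g_\bullet)_n=f_n+g_n$. $\overline{\mathcal{D}}[\mathsf{F}](f_\bullet)_n=\mathsf{F}(f_n)$. $\overline{\varepsilon}(f_\bullet)=f_0$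 (identity on objects). $\overline{\delta}(f_\bullet)$ is the sequence of $\overline{\mathcal{D}}[\mathbb{X}]$ with $0$-th term $f_\bullet$ and $n$-th term $\mathsf{D}^n[f_\bullet]$ (identity on objects). *)

(* Composition is written in DIAGRAMMATIC order: comp f g = "f then g" = fg. *)
From Stdlib Require Import Init.Logic.

Record clac : Type := Clac {
  ob   : Type;
  hom  : ob -> ob -> Type;
  idm  : forall A, hom A A;
  comp : forall A B C, hom A B -> hom B C -> hom A C;
  prod : ob -> ob -> ob;
  term : ob;
  pi0  : forall A B, hom (prod A B) A;
  pi1  : forall A B, hom (prod A B) B;
  pair : forall C A B, hom C A -> hom C B -> hom C (prod A B);
  bang : forall A, hom A term;
  add  : forall A B, hom A B -> hom A B -> hom A B;
  zero : forall A B, hom A B }.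

Arguments hom {c} _ _.
Arguments idm {c} A.
Arguments comp {c A B C} f g.
Arguments prod {c} A B.
Arguments term {c}.
Arguments pi0 {c} A B.
Arguments pi1 {c} A B.
Arguments pair {c C A B} f g.
Arguments bang {c} A.
Arguments add {c A B} f g.
Arguments zero {c} A B.

Record is_clac (X : clac) : Prop := {
  c_idl : forall A B (f : @hom X A B), comp (@idm X A) f = f;
  c_idr : forall A B (f : @hom X A B), comp f (@idm X B) = f;
  c_assoc : forall A B C D (f : @hom X A B) (g : @hom X B C) (h : @hom X C D),
      comp (comp f g) h = comp f (comp g h);
  c_pair0 : forall C A B (f : @hom X C A) (g : @hom X C B), comp (pair f g) (pi0 A B) = f;
  c_pair1 : forall C A B (f : @hom X C A) (g : @hom X C B), comp (pair f g) (pi1 A B) = g;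
  c_pair_uniq : forall C A B (h : @hom X C (@prod X A B)),
      pair (comp h (pi0 A B)) (comp h (pi1 A B)) = h;
  c_term_uniq : forall A (f : @hom X A (@term X)), f = bang A;
  c_addA : forall A B (f g h : @hom X A B), add f (add g h) = add (add f g) h;
  c_addC : forall A B (f g : @hom X A B), add f g = add g f;
  c_add0 : forall A B (f : @hom X A B), add (zero A B) f = f;
  c_compD : forall A B C (f : @hom X A B) (g h : @hom X B C),
      comp f (add g h) = add (comp f g) (comp f h);
  c_comp0 : forall A B C (f : @hom X A B), comp f (@zero X B C) = zero A C;
  c_pi0D : forall C A B (f g : @hom X C (@prod X A B)),
      comp (add f g) (pi0 A B) = add (comp f (pi0 A B)) (comp g (pi0 A B));
  c_pi1D : forall C A B (f g : @hom X C (@prod X A B)),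
      comp (add f g) (pi1 A B) = add (comp f (pi1 A B)) (comp g (pi1 A B));
  c_pi00 : forall C A B, comp (zero C (@prod X A B)) (pi0 A B) = zero C A;
  c_pi10 : forall C A B, comp (zero C (@prod X A B)) (pi1 A B) = zero C B }.

Record functor (X Y : clac) : Type := Functor {
  fob  : ob X -> ob Y;
  fhom : forall A B, @hom X A B -> @hom Y (fob A) (fob B);
  fprod : forall A B, fob (prod A B) = prod (fob A) (fob B) }.

Arguments Functor {X Y} fob fhom fprod.
Arguments fob {X Y} f A.
Arguments fhom {X Y} f {A B} g.
Arguments fprod {X Y} f A B.

Definition cast_src {X : clac} {A A' B : ob X} (e : A = A') (f : hom A B) : hom A' B :=
  eq_rect A (fun Z => hom Z B) f A' e.
Definition cast2 {X : clac} {A A' B B' : ob X} (e1 : A = A') (e2 : B = B')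
  (f : hom A B) : hom A' B' :=
  eq_rect B (fun Z => hom A' Z) (eq_rect A (fun Z => hom Z B) f A' e1) B' e2.

Record is_clac_functor {X Y : clac} (F : functor X Y) : Prop := {
  f_id : forall A, fhom F (idm A) = idm (fob F A);
  f_comp : forall A B C (f : hom A B) (g : hom B C),
      fhom F (comp f g) = comp (fhom F f) (fhom F g);
  f_term : fob F term = term;
  f_pi0 : forall A B, cast_src (fprod F A B) (fhom F (pi0 A B)) = pi0 (fob F A) (fob F B);
  f_pi1 : forall A B, cast_src (fprod F A B) (fhom F (pi1 A B)) = pi1 (fob F A) (fob F B);
  f_add : forall A B (f g : hom A B), fhom F (add f g) = add (fhom F f) (fhom F g);
  f_zero : forall A B, fhom F (zero A B) = zero (fob F A) (fob F B) }.

Definition fid (X : clac) : functor X X :=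
  Functor (fun A => A) (fun A B f => f) (fun A B => eq_refl).

Definition fcomp {X Y Z : clac} (F : functor X Y) (G : functor Y Z) : functor X Z :=
  Functor (fun A => fob G (fob F A)) (fun A B f => fhom G (fhom F f))
    (fun A B => eq_trans (f_equal (fob G) (fprod F A B)) (fprod G (fob F A) (fob F B))).

Definition fun_eq {X Y : clac} (F G : functor X Y) : Prop :=
  exists eo : forall A, fob F A = fob G A,
    forall A B (f : hom A B), cast2 (eo A) (eo B) (fhom F f) = fhom G f.

Section Dbar.
Variable X : clac.

Definition P (A : ob X) : ob X := prod A A.
Definition pmap {A B : ob X} (f : hom A B) : hom (P A) (P B) :=
  pair (comp (pi0 A A) f) (comp (pi1 A A) f).

Fixpoint Pn (n : nat) (A : ob X) : ob X :=
  match n with O => A | S m => Pn m (P A) end.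

Fixpoint Pmap (n : nat) {A B : ob X} (f : hom A B) : hom (Pn n A) (Pn n B) :=
  match n with O => f | S m => Pmap m (pmap f) end.

Definition dseq (A B : ob X) : Type := forall n : nat, hom (Pn n A) B.

Definition Tseq {A B : ob X} (f : dseq A B) : dseq (P A) (P B) :=
  fun n => pair (comp (Pmap n (pi0 A A)) (f n)) (f (S n)).

Fixpoint Tn (k : nat) {A B : ob X} (f : dseq A B) : dseq (Pn k A) (Pn k B) :=
  match k with O => f | S m => Tn m (Tseq f) end.

Definition Dseq {A B : ob X} (f : dseq A B) : dseq (P A) B := fun n => f (S n).

Fixpoint Dn (k : nat) {A B : ob X} (f : dseq A B) : dseq (Pn k A) B :=
  match k with O => f | S m => Dn m (Dseq f) end.

Fixpoint pi1s (n : nat) (A : ob X) : hom (Pn (S n) A) A :=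
  match n with
  | O => pi1 A A
  | S m => comp (pi1s m (P A)) (pi1 A A)
  end.

Definition idn (A : ob X) : dseq A A :=
  fun n => match n with O => idm A | S m => pi1s m A end.

Definition dcomp {A B C : ob X} (f : dseq A B) (g : dseq B C) : dseq A C :=
  fun n => comp (Tn n f 0) (g n).

End Dbar.

Arguments P {X} A.
Arguments Pn {X} n A.
Arguments Pmap {X} n {A B} f.
Arguments Tn {X} k {A B} f _.
Arguments Dn {X} k {A B} f _.

Definition Dbar (X : clac) : clac :=
  Clac (ob X) (dseq X) (idn X) (fun A B C f g => dcomp X f g)
    (@prod X) (@term X)
    (fun A B n => comp (idn X (prod A B) n) (pi0 A B))
    (fun A B n => comp (idn X (prod A B) n) (pi1 A B))
    (fun C A B f g n => pair (f n) (g n))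
    (fun A n => bang (Pn n A))
    (fun A B f g n => add (f n) (g n))
    (fun A B n => zero (Pn n A) B).

Fixpoint Pn_pres {X Y : clac} (F : functor X Y) (n : nat) :
    forall A : ob X, fob F (Pn n A) = Pn n (fob F A) :=
  match n return forall A : ob X, fob F (Pn n A) = Pn n (fob F A) with
  | O => fun A => eq_refl
  | S m => fun A => eq_trans (Pn_pres F m (P A))
                     (f_equal (fun Z => Pn m Z) (fprod F A A))
  end.

Definition Dbar_fun {X Y : clac} (F : functor X Y) : functor (Dbar X) (Dbar Y) :=
  Functor (X := Dbar X) (Y := Dbar Y) (fob F)
    (fun A B f n => cast_src (Pn_pres F n A) (fhom F (f n)))
    (fprod F).

Definition eps (X : clac) : functor (Dbar X) X :=
  Functor (X := Dbar X) (Y := X) (fun A => A) (fun A B f => f 0) (fun A B => eq_refl).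

Definition delta (X : clac) : functor (Dbar X) (Dbar (Dbar X)) :=
  Functor (X := Dbar X) (Y := Dbar (Dbar X)) (fun A => A)
    (fun A B f n => Dn n f) (fun A B => eq_refl).

(* The composition of pre-D-sequences is governed by the operator T: it
   preserves identities and composition (T(f * g) = T f * T g, by naturality of
   T with respect to the projections), so the category laws of D-bar X reduce to
   those of X, while pairing, sums and zero are computed levelwise and the
   projections are post-compositions. The comultiplication f |-> (D^n f)_n is a
   CLAC-morphism because D^n (f * g) = T^n f * D^n g and, inside D-bar X,
   T f = <pi0 * f, D f>, so that it commutes with T. The counit and comonad laws
   come down to (D^n f)_0 = f_n and D^n (f, D f, D^2 f, ...) = (D^n f, D^(n+1) f, ...).
   A CLAC-morphism F acts levelwise, up to the transport along
   F(P^n A) = P^n(F A), which is handled with heterogeneous equality. *)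

From Stdlib Require Import FunctionalExtensionality Eqdep.
From Corelib Require Import ssreflect.

Section Dbar_structure.
Variable X : clac.
Hypothesis HX : is_clac X.

Let compA := c_assoc X HX.

Lemma comp_pair C D A B (h : @hom X C D) (a : hom D A) (b : hom D B) :
  comp h (pair a b) = pair (comp h a) (comp h b).
Proof.
by rewrite -(c_pair_uniq _ HX _ _ _ (comp h (pair a b))) !compA
  (c_pair0 _ HX) (c_pair1 _ HX).
Qed.

Lemma pair_pmap C A B (a b : @hom X C A) (v : hom A B) :
  comp (pair a b) (pmap X v) = pair (comp a v) (comp b v).
Proof. by rewrite /pmap comp_pair -!compA (c_pair0 _ HX) (c_pair1 _ HX). Qed.

Lemma pmap_comp A B C (u : @hom X A B) (v : hom B C) :
  pmap X (comp u v) = comp (pmap X u) (pmap X v).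
Proof. by rewrite {2}/pmap pair_pmap !compA. Qed.

Lemma Pmap_comp n A B C (u : @hom X A B) (v : hom B C) :
  Pmap n (comp u v) = comp (Pmap n u) (Pmap n v).
Proof. by elim: n A B C u v => [|n IHn] A B C u v //=; rewrite pmap_comp IHn. Qed.

Lemma pmap_pi0 A B (u : @hom X A B) : comp (pmap X u) (pi0 B B) = comp (pi0 A A) u.
Proof. exact: c_pair0. Qed.

Lemma pmap_pi1 A B (u : @hom X A B) : comp (pmap X u) (pi1 B B) = comp (pi1 A A) u.
Proof. exact: c_pair1. Qed.

Lemma Pmap_pi1s n A B (u : @hom X A B) :
  comp (Pmap (S n) u) (pi1s X n B) = comp (pi1s X n A) u.
Proof.
elim: n A B u => [|n IHn] A B u /=; first exact: pmap_pi1.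
by rewrite -compA (IHn _ _ (pmap X u)) !compA pmap_pi1.
Qed.

Lemma Tseq_idn A : Tseq X (idn X A) = idn X (P A).
Proof.
apply: functional_extensionality_dep => -[|n] /=; rewrite /Tseq.
- by rewrite (c_idr _ HX) -[RHS](c_pair_uniq _ HX) !(c_idl _ HX).
- by rewrite /idn /= Pmap_pi1s (c_pair_uniq _ HX).
Qed.

Lemma Tn_idn n A : Tn n (idn X A) = idn X (Pn n A).
Proof. by elim: n A => [|n IHn] A //=; rewrite Tseq_idn IHn. Qed.

Lemma comp_Tn_idn n A B (f : dseq X A B) : comp (Tn n f 0) (idn X B n) = f n.
Proof.
case: n => [|n]; first exact: c_idr.
elim: n A B f => [|n IHn] A B f; first exact: c_pair1.
by rewrite /= -compA (IHn _ _ (Tseq X f)) /Tseq (c_pair1 _ HX).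
Qed.

Definition seq_comp {A B C} (h : dseq X A B) (k : @hom X B C) : dseq X A C :=
  fun n => comp (h n) k.

(* (dlift k)_n = i_n k; the projections of D-bar X are dlift pi0 and dlift pi1. *)
Definition dlift {A B} (k : @hom X A B) : dseq X A B := seq_comp (idn X A) k.

Lemma dcomp_dlift A B C (h : dseq X A B) (k : @hom X B C) :
  dcomp X h (dlift k) = seq_comp h k.
Proof.
by apply: functional_extensionality_dep => n; rewrite /dcomp /dlift /seq_comp
  -compA comp_Tn_idn.
Qed.

Lemma Tseq_natural {A B A' B'} {u : hom A' A} {v : hom B' B}
    {g : dseq X A' B'} {f : dseq X A B} :
  (forall k, comp (g k) v = comp (Pmap k u) (f k)) ->
  forall k, comp (Tseq X g k) (pmap X v) = comp (Pmap k (pmap X u)) (Tseq X f k).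
Proof.
move=> gf k; rewrite /Tseq pair_pmap comp_pair !compA gf (gf (S k)).
by rewrite -!compA -!Pmap_comp /P pmap_pi0.
Qed.

Lemma Tn_natural n {A B A' B'} {u : hom A' A} {v : hom B' B}
    {g : dseq X A' B'} {f : dseq X A B} :
  (forall k, comp (g k) v = comp (Pmap k u) (f k)) ->
  forall k, comp (Tn n g k) (Pmap n v) = comp (Pmap k (Pmap n u)) (Tn n f k).
Proof.
elim: n A B A' B' u v g f => [|n IHn] A B A' B' u v g f gf //=.
by apply: IHn; apply: Tseq_natural.
Qed.

Lemma Tseq_dcomp A B C (f : dseq X A B) (g : dseq X B C) :
  Tseq X (dcomp X f g) = dcomp X (Tseq X f) (Tseq X g).
Proof.
apply: functional_extensionality_dep => n.
rewrite /dcomp {2}/Tseq comp_pair -compA.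
have Tf_pi0 k : comp (Tseq X f k) (pi0 B B) = comp (Pmap k (pi0 A A)) (f k).
  exact: c_pair0.
by rewrite (Tn_natural n Tf_pi0 0) compA.
Qed.

Lemma Tn_dcomp n A B C (f : dseq X A B) (g : dseq X B C) :
  Tn n (dcomp X f g) = dcomp X (Tn n f) (Tn n g).
Proof. by elim: n A B C f g => [|n IHn] A B C f g //=; rewrite Tseq_dcomp IHn. Qed.

Lemma Dbar_comp_pi0 (C A B : ob X) (h : @hom (Dbar X) C (prod A B)) :
  comp h (@pi0 (Dbar X) A B) = seq_comp h (@pi0 X A B).
Proof. exact: dcomp_dlift. Qed.

Lemma Dbar_comp_pi1 (C A B : ob X) (h : @hom (Dbar X) C (prod A B)) :
  comp h (@pi1 (Dbar X) A B) = seq_comp h (@pi1 X A B).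
Proof. exact: dcomp_dlift. Qed.

Lemma Dbar_is_clac : is_clac (Dbar X).
Proof.
constructor=> *; rewrite ?Dbar_comp_pi0 ?Dbar_comp_pi1;
  apply: functional_extensionality_dep => n /=.
- by rewrite /dcomp Tn_idn (c_idl _ HX).
- exact: comp_Tn_idn.
- by rewrite /dcomp Tn_dcomp compA.
- exact: (c_pair0 _ HX).
- exact: (c_pair1 _ HX).
- exact: (c_pair_uniq _ HX).
- exact: (c_term_uniq _ HX).
- exact: (c_addA _ HX).
- exact: (c_addC _ HX).
- exact: (c_add0 _ HX).
- exact: (c_compD _ HX).
- exact: (c_comp0 _ HX).
- exact: (c_pi0D _ HX).
- exact: (c_pi1D _ HX).
- exact: (c_pi00 _ HX).
- exact: (c_pi10 _ HX).
Qed.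

Lemma Dn_pair n A B C (a : dseq X A B) (b : dseq X A C) :
  Dn n (@pair (Dbar X) _ _ _ a b) = @pair (Dbar X) _ _ _ (Dn n a) (Dn n b).
Proof. by elim: n A a b => [|n IHn] A a b //=; apply: IHn. Qed.

Lemma Dn_add n A B (f g : dseq X A B) :
  Dn n (@add (Dbar X) _ _ f g) = @add (Dbar X) _ _ (Dn n f) (Dn n g).
Proof. by elim: n A f g => [|n IHn] A f g //=; apply: IHn. Qed.

Lemma Dn_zero n A B : Dn n (@zero (Dbar X) A B) = @zero (Dbar X) (Pn n A) B.
Proof. by elim: n A => [|n IHn] A //=; apply: IHn. Qed.

Lemma Dn_seq_comp n A B C (h : dseq X A B) (k : @hom X B C) :
  Dn n (seq_comp h k) = seq_comp (Dn n h) k.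
Proof. by elim: n A h => [|n IHn] A h //=; apply: IHn. Qed.

Lemma Dn_dcomp n A B C (f : dseq X A B) (g : dseq X B C) :
  Dn n (dcomp X f g) = dcomp X (Tn n f) (Dn n g).
Proof. by elim: n A B f g => [|n IHn] A B f g //=; apply: IHn. Qed.

Lemma Dn_at0 n A B (f : dseq X A B) : Dn n f 0 = f n.
Proof. by elim: n A f => [|n IHn] A f //=; apply: IHn. Qed.

Lemma Tseq_seq_comp A B C (h : dseq X A B) (k : @hom X B C) :
  Tseq X (seq_comp h k) = seq_comp (Tseq X h) (pmap X k).
Proof.
by apply: functional_extensionality_dep => n; rewrite /Tseq /seq_comp pair_pmap !compA.
Qed.

Lemma Tn_dlift n A B (k : @hom X A B) : Tn n (dlift k) = dlift (Pmap n k).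
Proof.
by elim: n A B k => [|n IHn] A B k //=; rewrite /dlift Tseq_seq_comp Tseq_idn IHn.
Qed.

Lemma pmap_dlift A B (k : @hom X A B) : pmap (Dbar X) (dlift k) = dlift (pmap X k).
Proof.
rewrite /pmap /= !dcomp_dlift.
by apply: functional_extensionality_dep => n; rewrite /dlift /seq_comp comp_pair !compA.
Qed.

Lemma Pmap_dlift n A B (k : @hom X A B) :
  Pmap (X := Dbar X) n (dlift k) = dlift (Pmap n k).
Proof.
by elim: n A B k => [|n IHn] A B k //; rewrite -(IHn _ _ (pmap X k)) -pmap_dlift.
Qed.

(* Unlike the defining formula of T, this form commutes with D^n. *)
Lemma Tseq_pair_Dseq A B (f : dseq X A B) :
  Tseq X f = @pair (Dbar X) _ _ _ (dcomp X (dlift (pi0 A A)) f) (Dseq X f).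
Proof.
apply: functional_extensionality_dep => n.
by rewrite /= /dcomp Tn_dlift /Tseq /dlift /seq_comp /= (c_idl _ HX).
Qed.

Lemma Tseq_delta A B (f : dseq X A B) :
  Tseq (Dbar X) (fhom (delta X) f) = fhom (delta X) (Tseq X f).
Proof.
apply: functional_extensionality_dep => n.
by rewrite /= Tseq_pair_Dseq Dn_pair Dn_dcomp Tn_dlift -Pmap_dlift.
Qed.

Lemma Tn_delta n A B (f : dseq X A B) :
  Tn (X := Dbar X) n (fhom (delta X) f) = fhom (delta X) (Tn n f).
Proof. by elim: n A B f => [|n IHn] A B f //=; rewrite Tseq_delta IHn. Qed.

Lemma Dn_delta n A B (f : dseq X A B) :
  Dn (X := Dbar X) n (fhom (delta X) f) = fhom (delta X) (Dn n f).
Proof. by elim: n A f => [|n IHn] A f //=; apply: IHn. Qed.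

Lemma Dseq_idn A : Dseq X (idn X A) = dlift (pi1 A A).
Proof.
apply: functional_extensionality_dep => -[|n] //=.
by rewrite /dlift /seq_comp /= (c_idl _ HX).
Qed.

Lemma Dn_idn n A : Dn n (idn X A) = idn (Dbar X) A n.
Proof.
elim: n A => [|n IHn] A //=.
rewrite Dseq_idn /dlift Dn_seq_comp IHn.
by case: n {IHn} => [|n] //=; rewrite dcomp_dlift.
Qed.

Lemma delta_is_clac_functor : is_clac_functor (delta X).
Proof.
constructor=> //= *; apply: functional_extensionality_dep => n.
- exact: Dn_idn.
- by rewrite Dn_dcomp /dcomp Tn_delta.
- by rewrite /dlift Dn_seq_comp dcomp_dlift Dn_idn.
- by rewrite /dlift Dn_seq_comp dcomp_dlift Dn_idn.
- exact: Dn_add.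
- exact: Dn_zero.
Qed.

Lemma eps_is_clac_functor : is_clac_functor (eps X).
Proof. by constructor=> //= *; apply: (c_idl _ HX). Qed.

End Dbar_structure.

(* Equality in the total space of hom; JMeq would not record the (co)domains,
   since hom need not be injective. *)
Definition heq {X : clac} {A B A' B' : ob X} (f : hom A B) (g : hom A' B') : Prop :=
  existT (fun AB => hom (fst AB) (snd AB)) (A, B) f =
  existT (fun AB => hom (fst AB) (snd AB)) (A', B') g.

Section Heq.
Context {X : clac}.

Lemma heq_ob {A B A' B' : ob X} {f : hom A B} {g : hom A' B'} : heq f g -> A = A' /\ B = B'.
Proof. by case/(f_equal (@projT1 _ _)). Qed.

Lemma heq_eq {A B : ob X} {f g : hom A B} : heq f g -> f = g.
Proof. exact: inj_pair2. Qed.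

Lemma heq_refl {A B : ob X} (f : hom A B) : heq f f.
Proof. by []. Qed.

Lemma heq_sym {A B A' B' : ob X} {f : hom A B} {g : hom A' B'} : heq f g -> heq g f.
Proof. exact: eq_sym. Qed.

Lemma heq_trans {A B A' B' A'' B'' : ob X} {f : hom A B} {g : hom A' B'}
    {h : @hom X A'' B''} :
  heq f g -> heq g h -> heq f h.
Proof. exact: eq_trans. Qed.

Lemma heq_cast_src {A A' B : ob X} (e : A = A') (f : hom A B) : heq (cast_src e f) f.
Proof. by case: A' / e. Qed.

Lemma heq_cast2 {A A' B B' : ob X} (e1 : A = A') (e2 : B = B') (f : hom A B) :
  heq (cast2 e1 e2 f) f.
Proof. by case: A' / e1; case: B' / e2. Qed.

Lemma cast_src_heq {A A' B : ob X} (e : A = A') (f : hom A B) (g : hom A' B) :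
  heq f g -> cast_src e f = g.
Proof. by case: A' / e g => g /heq_eq. Qed.

Lemma heq_cast_src_Dbar {A A' B : ob X} (e : A = A') (f : dseq X A B) n :
  heq (@cast_src (Dbar X) _ _ _ e f n) (f n).
Proof. by case: A' / e. Qed.

Lemma heq_obfun {o1 o2 : ob X -> ob X} (h : forall A, hom (o1 A) (o2 A)) {A A' : ob X} :
  A = A' -> heq (h A) (h A').
Proof. by case: A' /. Qed.

Lemma heq_comp {A B C A' B' C' : ob X} {f : hom A B} {g : hom B C}
    {f' : hom A' B'} {g' : hom B' C'} :
  heq f f' -> heq g g' -> heq (comp f g) (comp f' g').
Proof.
move=> ff' gg'; case: (heq_ob ff') (heq_ob gg') => eA eB [_ eC]; subst.
by rewrite (heq_eq ff') (heq_eq gg').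
Qed.

Lemma heq_pair {C A B C' A' B' : ob X} {f : hom C A} {g : hom C B}
    {f' : hom C' A'} {g' : hom C' B'} :
  heq f f' -> heq g g' -> heq (pair f g) (pair f' g').
Proof.
move=> ff' gg'; case: (heq_ob ff') (heq_ob gg') => eC eA [_ eB]; subst.
by rewrite (heq_eq ff') (heq_eq gg').
Qed.

Lemma heq_add {A B A' B' : ob X} {f g : hom A B} {f' g' : hom A' B'} :
  heq f f' -> heq g g' -> heq (add f g) (add f' g').
Proof.
move=> ff' gg'; case: (heq_ob ff') => eA eB; subst.
by rewrite (heq_eq ff') (heq_eq gg').
Qed.

Lemma heq_Pmap n {A B A' B' : ob X} {u : hom A B} {u' : hom A' B'} :
  heq u u' -> heq (Pmap n u) (Pmap n u').
Proof. by move=> uu'; case: (heq_ob uu') => eA eB; subst; rewrite (heq_eq uu'). Qed.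

End Heq.

Lemma heq_fhom {X Y : clac} (F : functor X Y) {A B A' B' : ob X}
    {f : hom A B} {g : hom A' B'} :
  heq f g -> heq (fhom F f) (fhom F g).
Proof. by move=> fg; case: (heq_ob fg) => eA eB; subst; rewrite (heq_eq fg). Qed.

Section Dbar_fun.
Context {X Y : clac} (F : functor X Y).
Hypotheses (HX : is_clac X) (HY : is_clac Y) (HF : is_clac_functor F).

Lemma fhom_pi0 A B : heq (fhom F (pi0 A B)) (pi0 (fob F A) (fob F B)).
Proof. by rewrite -(f_pi0 _ HF); apply/heq_sym/heq_cast_src. Qed.

Lemma fhom_pi1 A B : heq (fhom F (pi1 A B)) (pi1 (fob F A) (fob F B)).
Proof. by rewrite -(f_pi1 _ HF); apply/heq_sym/heq_cast_src. Qed.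

Lemma fhom_pair {C A B} (f : hom C A) (g : hom C B) :
  heq (fhom F (pair f g)) (pair (fhom F f) (fhom F g)).
Proof.
set h := cast2 eq_refl (fprod F A B) (fhom F (pair f g)).
have h_pi0 : comp h (pi0 _ _) = fhom F f.
  apply: heq_eq; rewrite -(c_pair0 _ HX _ _ _ f g) (f_comp _ HF).
  exact: heq_comp (heq_cast2 _ _ _) (heq_sym (fhom_pi0 A B)).
have h_pi1 : comp h (pi1 _ _) = fhom F g.
  apply: heq_eq; rewrite -(c_pair1 _ HX _ _ _ f g) (f_comp _ HF).
  exact: heq_comp (heq_cast2 _ _ _) (heq_sym (fhom_pi1 A B)).
rewrite -h_pi0 -h_pi1 (c_pair_uniq _ HY).
exact/heq_sym/heq_cast2.
Qed.

Lemma fhom_pmap {A B} (u : hom A B) : heq (fhom F (pmap X u)) (pmap Y (fhom F u)).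
Proof.
apply: heq_trans (fhom_pair _ _) _; rewrite !(f_comp _ HF).
exact: heq_pair (heq_comp (fhom_pi0 A A) (heq_refl _))
                (heq_comp (fhom_pi1 A A) (heq_refl _)).
Qed.

Lemma fhom_Pmap n {A B} (u : hom A B) : heq (fhom F (Pmap n u)) (Pmap n (fhom F u)).
Proof.
elim: n A B u => [|n IHn] A B u /=; first exact: heq_refl.
exact: heq_trans (IHn _ _ _) (heq_Pmap n (fhom_pmap u)).
Qed.

Lemma fhom_pi1s n A : heq (fhom F (pi1s X n A)) (pi1s Y n (fob F A)).
Proof.
elim: n A => [|n IHn] A /=; first exact: fhom_pi1.
rewrite (f_comp _ HF); apply: heq_comp (fhom_pi1 A A).
exact: heq_trans (IHn _) (heq_obfun (pi1s Y n) (fprod F A A)).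
Qed.

Lemma fhom_idn n A : heq (fhom F (idn X A n)) (idn Y (fob F A) n).
Proof. by case: n => [|n]; [rewrite (f_id _ HF) | apply: fhom_pi1s]. Qed.

Lemma fhom_Dbar_fun {A B} (f : dseq X A B) n : heq (fhom F (f n)) (fhom (Dbar_fun F) f n).
Proof. exact/heq_sym/heq_cast_src. Qed.

Lemma Tseq_fhom {A B A' B'} {f : dseq X A B} {g : dseq Y A' B'} :
  (forall n, heq (fhom F (f n)) (g n)) ->
  forall n, heq (fhom F (Tseq X f n)) (Tseq Y g n).
Proof.
move=> fg n; case: (heq_ob (fg 0)) => /= eA _; subst A'.
apply: heq_trans (fhom_pair _ _) (heq_pair _ (fg (S n))).
rewrite (f_comp _ HF); apply: heq_comp (fg n).
exact: heq_trans (fhom_Pmap _ _) (heq_Pmap n (fhom_pi0 A A)).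
Qed.

Lemma Tn_fhom k {A B A' B'} {f : dseq X A B} {g : dseq Y A' B'} :
  (forall n, heq (fhom F (f n)) (g n)) ->
  forall n, heq (fhom F (Tn k f n)) (Tn k g n).
Proof.
elim: k A B A' B' f g => [|k IHk] A B A' B' f g fg //=.
by apply: IHk; apply: Tseq_fhom.
Qed.

Lemma Dn_fhom k {A B A' B'} {f : dseq X A B} {g : dseq Y A' B'} :
  (forall n, heq (fhom F (f n)) (g n)) ->
  forall n, heq (fhom F (Dn k f n)) (Dn k g n).
Proof.
elim: k A B A' B' f g => [|k IHk] A B A' B' f g fg //=.
by apply: IHk => n; apply: (fg (S n)).
Qed.

Lemma Dbar_fun_dlift {A B A'} (e : fob F A = A') (k : hom A B) (k' : hom A' (fob F B)) :
  heq (fhom F k) k' -> @cast_src (Dbar Y) _ _ _ e (fhom (Dbar_fun F) (dlift X k)) = dlift Y k'.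
Proof.
move=> kk'; apply: functional_extensionality_dep => n; apply: heq_eq.
apply: heq_trans (heq_cast_src_Dbar e _ n) _.
apply: heq_trans (heq_sym (fhom_Dbar_fun _ n)) _; rewrite (f_comp _ HF).
exact: heq_comp (heq_trans (fhom_idn n A) (heq_obfun (fun Z => idn Y Z n) e)) kk'.
Qed.

Lemma Dbar_fun_is_clac_functor : is_clac_functor (Dbar_fun F).
Proof.
constructor=> [A|A B C f g||A B|A B|A B f g|A B].
- apply: functional_extensionality_dep => n; apply: cast_src_heq.
  exact: fhom_idn.
- apply: functional_extensionality_dep => n; apply: cast_src_heq.
  rewrite /= (f_comp _ HF).
  exact: heq_comp (Tn_fhom n (fhom_Dbar_fun f) 0) (fhom_Dbar_fun g n).
- exact: (f_term _ HF).
- exact: Dbar_fun_dlift (fhom_pi0 A B).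
- exact: Dbar_fun_dlift (fhom_pi1 A B).
- apply: functional_extensionality_dep => n; apply: cast_src_heq.
  rewrite /= (f_add _ HF).
  exact: heq_add (fhom_Dbar_fun f n) (fhom_Dbar_fun g n).
- apply: functional_extensionality_dep => n; apply: cast_src_heq.
  rewrite /= (f_zero _ HF).
  exact: (heq_obfun (fun Z => zero Z (fob F B)) (Pn_pres F n A)).
Qed.

End Dbar_fun.

Lemma Dbar_fun_fid X : fun_eq (Dbar_fun (fid X)) (fid (Dbar X)).
Proof.
exists (fun A => eq_refl) => A B f /=.
by apply: functional_extensionality_dep => n; apply: cast_src_heq.
Qed.

Lemma Dbar_fun_fcomp X Y Z (F : functor X Y) (G : functor Y Z) :
  fun_eq (Dbar_fun (fcomp F G)) (fcomp (Dbar_fun F) (Dbar_fun G)).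
Proof.
exists (fun A => eq_refl) => A B f /=.
apply: functional_extensionality_dep => n; apply: cast_src_heq.
apply: heq_sym; apply: heq_trans (heq_cast_src _ _) _.
exact/heq_fhom/heq_cast_src.
Qed.

Lemma eps_natural X Y (F : functor X Y) :
  fun_eq (fcomp (Dbar_fun F) (eps Y)) (fcomp (eps X) F).
Proof. by exists (fun A => eq_refl). Qed.

Lemma delta_natural X Y (F : functor X Y) :
  fun_eq (fcomp (Dbar_fun F) (delta Y)) (fcomp (delta X) (Dbar_fun (Dbar_fun F))).
Proof.
exists (fun A => eq_refl) => A B f /=.
apply: functional_extensionality_dep => n; apply: functional_extensionality_dep => k.
apply: heq_eq; apply: heq_sym; apply: heq_trans (heq_cast_src_Dbar _ _ k) _.
exact: heq_trans (heq_cast_src _ _) (Dn_fhom F n (fhom_Dbar_fun F f) k).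
Qed.

Lemma delta_eps X : fun_eq (fcomp (delta X) (eps (Dbar X))) (fid (Dbar X)).
Proof. by exists (fun A => eq_refl). Qed.

Lemma delta_Dbar_fun_eps X :
  fun_eq (fcomp (delta X) (Dbar_fun (eps X))) (fid (Dbar X)).
Proof.
exists (fun A => eq_refl) => A B f /=.
apply: functional_extensionality_dep => n; apply: cast_src_heq.
by rewrite Dn_at0.
Qed.

Lemma delta_coassoc X :
  fun_eq (fcomp (delta X) (delta (Dbar X))) (fcomp (delta X) (Dbar_fun (delta X))).
Proof.
exists (fun A => eq_refl) => A B f /=.
apply: functional_extensionality_dep => n; apply: eq_sym; apply: cast_src_heq.
by rewrite Dn_delta.
Qed.

Theorem proposition3p25 :
  (* D-bar maps CLACs to CLACs *)
  (forall X : clac, is_clac X -> is_clac (Dbar X)) /\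
  (* D-bar maps CLAC-morphisms to CLAC-morphisms *)
  (forall (X Y : clac) (F : functor X Y),
      is_clac X -> is_clac Y -> is_clac_functor F -> is_clac_functor (Dbar_fun F)) /\
  (* functoriality *)
  (forall X : clac, is_clac X -> fun_eq (Dbar_fun (fid X)) (fid (Dbar X))) /\
  (forall (X Y Z : clac) (F : functor X Y) (G : functor Y Z),
      is_clac X -> is_clac Y -> is_clac Z ->
      is_clac_functor F -> is_clac_functor G ->
      fun_eq (Dbar_fun (fcomp F G)) (fcomp (Dbar_fun F) (Dbar_fun G))) /\
  (* components of eps and delta are CLAC-morphisms *)
  (forall X : clac, is_clac X -> is_clac_functor (eps X)) /\
  (forall X : clac, is_clac X -> is_clac_functor (delta X)) /\
  (* naturality of eps and delta *)
  (forall (X Y : clac) (F : functor X Y),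
      is_clac X -> is_clac Y -> is_clac_functor F ->
      fun_eq (fcomp (Dbar_fun F) (eps Y)) (fcomp (eps X) F)) /\
  (forall (X Y : clac) (F : functor X Y),
      is_clac X -> is_clac Y -> is_clac_functor F ->
      fun_eq (fcomp (Dbar_fun F) (delta Y)) (fcomp (delta X) (Dbar_fun (Dbar_fun F)))) /\
  (* comonad laws (diagrammatic order) *)
  (forall X : clac, is_clac X ->
      fun_eq (fcomp (delta X) (eps (Dbar X))) (fid (Dbar X))) /\
  (forall X : clac, is_clac X ->
      fun_eq (fcomp (delta X) (Dbar_fun (eps X))) (fid (Dbar X))) /\
  (forall X : clac, is_clac X ->
      fun_eq (fcomp (delta X) (delta (Dbar X)))
             (fcomp (delta X) (Dbar_fun (delta X)))).
Proof.
split; first exact: Dbar_is_clac.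
split; first exact: @Dbar_fun_is_clac_functor.
split; first by move=> X _; apply: Dbar_fun_fid.
split; first by move=> X Y Z F G *; apply: Dbar_fun_fcomp.
split; first exact: eps_is_clac_functor.
split; first exact: delta_is_clac_functor.
split; first by move=> X Y F *; apply: eps_natural.
split; first by move=> X Y F *; apply: delta_natural.
split; first by move=> X _; apply: delta_eps.
split; first by move=> X _; apply: delta_Dbar_fun_eps.
by move=> X _; apply: delta_coassoc.
Qed.
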